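(* Let $A$ be an $n\times n$ irreducible nonnegative matrix with largest eigenvalue $1$ and a positive vector $w$ with $Aw=w$ and $A^Tw=w$. For $\alpha\in[0,1]$ let $A_\alpha=\alpha A+(1-\alpha)A^T$. Then for every nonempty $U\subsetneq[n]$, every $b\in\mathbb R^{|U|}$, and every $0\le\beta\le\alpha\le\frac12$, \[ \operatorname{cap}_{U,b}(A_\alpha)\le\operatorname{cap}_{U,b}(A_\beta). \]
   Context: For an irreducible nonnegative $n\times n$ matrix $B$ with PF eigenvalue $1$ and a positive vector $w$ with $Bw=w$, $B^Tw=w$, set $L=I-B$. For nonempty $U\subsetneq[n]$ and $b\in\mathbb R^{|U|}$ (indexed by $U$), there is a unique $q\in\mathbb R^n$ with $q_i=w_ib_i$ for $i\in U$ and $(Lq)_i=0$ for $i\notin U$; define the capacity $\operatorname{cap}_{U,b}(B)=\langle q,Lq\rangle$. (Each $A_\alpha$ is irreducible nonnegative with the same $w$ as left and right eigenvector for eigenvalue $1$.) *)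

From HB Require Import structures.
From mathcomp Require Import all_boot all_order all_algebra.
From mathcomp Require Import complex.
From mathcomp Require Import boolp classical_sets.
From mathcomp Require Import reals.
Set Implicit Arguments. Unset Strict Implicit. Unset Printing Implicit Defensive.
Import Order.TTheory GRing.Theory Num.Theory.
Local Open Scope ring_scope.

Definition mxpow (R : pzRingType) n (A : 'M[R]_n) (k : nat) : 'M[R]_n :=
  iter k (mulmx A) 1%:M.

Definition nonneg_mx (R : numDomainType) n (A : 'M[R]_n) : Prop :=
  forall i j, 0 <= A i j.

(* irreducible nonnegative matrix: its digraph is strongly connected,
   i.e. for all i, j some power of A has a positive (i,j) entry *)
Definition irreducible_mx (R : numDomainType) n (A : 'M[R]_n) : Prop :=
  forall i j, exists k, 0 < mxpow A k i j.

Definition cx_eigenvalue (R : rcfType) n (A : 'M[R]_n) (l : R[i]) : Prop :=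
  exists2 v : 'cV[R[i]]_n, v != 0 & map_mx (fun x => x%:C%C) A *m v = l *: v.

Definition largest_eigenvalue_one (R : rcfType) n (A : 'M[R]_n) : Prop :=
  cx_eigenvalue A 1 /\ forall l, cx_eigenvalue A l -> `|l| <= 1.

Definition mx_alpha (R : pzRingType) n (A : 'M[R]_n) (a : R) : 'M[R]_n :=
  a *: A + (1 - a) *: A^T.

Definition lapl (R : pzRingType) n (B : 'M[R]_n) : 'M[R]_n := 1%:M - B.

Definition cap_sol (R : pzRingType) n (B : 'M[R]_n) (w : 'cV[R]_n)
  (U : {set 'I_n}) (b : 'I_n -> R) (q : 'cV[R]_n) : Prop :=
  (forall i, i \in U -> q i 0 = w i 0 * b i) /\
  (forall i, i \notin U -> (lapl B *m q) i 0 = 0).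

(* cap_{U,b}(B) = <q, L q> for the (unique) q above *)
Definition cap (R : realType) n (B : 'M[R]_n) (w : 'cV[R]_n)
  (U : {set 'I_n}) (b : 'I_n -> R) : R :=
  let q := xget 0 (cap_sol B w U b) in
  \sum_i q i 0 * (lapl B *m q) i 0.

From HB Require Import structures.
From mathcomp Require Import all_boot all_order all_algebra.
From mathcomp Require Import complex boolp classical_sets reals.
From mathcomp Require Import ring lra.
Import Order.TTheory GRing.Theory Num.Theory.
Set Implicit Arguments. Unset Strict Implicit. Unset Printing Implicit Defensive.
Local Open Scope ring_scope.

(* Write E(x) = <x, x> - <x, A x> and J(x, y) = <x, A y> - <y, A x>.  For every a the
   quadratic form of L_a = I - A_a is E, and since w is a left and right Perron vector,
   2 E(x) = sum_ij A_ij w_i w_j (x_i / w_i - x_j / w_j)^2; so E >= 0 and, by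
   irreducibility, E vanishes only on multiples of w, which makes the Dirichlet problem
   defining q solvable.  For the comparison, d = q_beta - q_alpha vanishes on U,
   hence <d, L_alpha q_alpha> = <d, L_beta q_beta> = 0.  Subtracting these relations gives
   (alpha - beta) J(q_alpha, d) = E(d) >= 0, and expanding the capacities gives
   cap(beta) - cap(alpha) = (1 - 2 alpha) J(q_alpha, d) + E(d) >= 0. *)

Section BilinearForm.
Variables (R : comPzRingType) (n : nat).
Implicit Types (M N : 'M[R]_n) (x y z : 'cV[R]_n).

Definition mxform M x y : R := (x^T *m M *m y) 0 0.

Lemma sum_mul_mulmx M x y : \sum_i x i 0 * (M *m y) i 0 = mxform M x y.
Proof. by rewrite /mxform -mulmxA mxE; apply: eq_bigr => i _; rewrite !mxE. Qed.

Lemma mxform_sum M x y : mxform M x y = \sum_i \sum_j x i 0 * M i j * y j 0.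
Proof.
rewrite -sum_mul_mulmx; apply: eq_bigr => i _.
by rewrite mxE mulr_sumr; apply: eq_bigr => j _; rewrite mulrA.
Qed.

Lemma mxformDl M x y z : mxform M (x + y) z = mxform M x z + mxform M y z.
Proof. by rewrite /mxform linearD /= !mulmxDl mxE. Qed.

Lemma mxformDr M x y z : mxform M x (y + z) = mxform M x y + mxform M x z.
Proof. by rewrite /mxform mulmxDr mxE. Qed.

Lemma mxformDm M N x y : mxform (M + N) x y = mxform M x y + mxform N x y.
Proof. by rewrite /mxform mulmxDr mulmxDl mxE. Qed.

Lemma mxformBm M N x y : mxform (M - N) x y = mxform M x y - mxform N x y.
Proof. by rewrite /mxform mulmxBr mulmxBl !mxE. Qed.

Lemma mxformZm a M x y : mxform (a *: M) x y = a * mxform M x y.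
Proof. by rewrite /mxform -scalemxAr -scalemxAl mxE. Qed.

Lemma mxform_trmx M x y : mxform M^T x y = mxform M y x.
Proof.
by rewrite /mxform -[in LHS](trmxK y) -!trmx_mul mulmxA mxE.
Qed.

Lemma mxform1C x y : mxform 1%:M x y = mxform 1%:M y x.
Proof. by rewrite -mxform_trmx trmx1. Qed.

Lemma mxform_orthogonal M (U : {set 'I_n}) x y :
  (forall i, i \in U -> x i 0 = 0) -> (forall i, i \notin U -> (M *m y) i 0 = 0) ->
  mxform M x y = 0.
Proof.
move=> xU My; rewrite -sum_mul_mulmx; apply: big1 => i _.
by case: (boolP (i \in U)) => iU; [rewrite xU ?mul0r | rewrite My ?mulr0].
Qed.

Definition dirichlet_energy M x := mxform 1%:M x x - mxform M x x.

Lemma mxform_lapl_mx_alpha M a x y :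
  mxform (lapl (mx_alpha M a)) x y = mxform 1%:M x y - a * mxform M x y - (1 - a) * mxform M y x.
Proof. by rewrite mxformBm mxformDm !mxformZm mxform_trmx; ring. Qed.

Lemma mxform_lapl_mx_alpha_diag M a x :
  mxform (lapl (mx_alpha M a)) x x = dirichlet_energy M x.
Proof. by rewrite mxform_lapl_mx_alpha /dirichlet_energy; ring. Qed.

End BilinearForm.

Lemma irreducible_mx_invariant (R : realDomainType) n (A : 'M[R]_n) (T : Type) (u : 'I_n -> T) :
  nonneg_mx A -> irreducible_mx A -> (forall i j, 0 < A i j -> u i = u j) ->
  forall i j, u i = u j.
Proof.
move=> A_ge0 A_irr u_edge i j; have [k] := A_irr i j.
elim: k => [|k IHk] in i *; first by rewrite mxE; case: eqP => [->|]; rewrite ?ltxx.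
rewrite /mxpow iterS -/(mxpow A k) mxE.
case: (pickP (fun l => 0 < A i l * mxpow A k l j)) => [l Akl _|none]; last first.
  by rewrite ltNge sumr_le0 // => l _; rewrite leNgt none.
have Ail : 0 < A i l.
  by rewrite lt_def A_ge0 andbT; apply: contraTneq Akl => ->; rewrite mul0r ltxx.
by rewrite (u_edge _ _ Ail); apply: IHk; rewrite -(pmulr_rgt0 _ Ail).
Qed.

Section DirichletEnergy.
Variables (R : realFieldType) (n : nat) (A : 'M[R]_n) (w : 'cV[R]_n).
Hypotheses (w_gt0 : forall i, 0 < w i 0) (Aw : A *m w = w) (ATw : A^T *m w = w).

Let edge_term (x : 'cV[R]_n) i j :=
  A i j * w i 0 * w j 0 * (x i 0 / w i 0 - x j 0 / w j 0) ^+ 2.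

Lemma dirichlet_energy_sum_sq x :
  2 * dirichlet_energy A x = \sum_i \sum_j edge_term x i j.
Proof.
have w_neq0 i : w i 0 != 0 by rewrite gt_eqF.
have row_sum i : \sum_j A i j * w j 0 = w i 0 by rewrite -[in RHS]Aw mxE.
have col_sum j : \sum_i A i j * w i 0 = w j 0.
  by rewrite -[in RHS]ATw mxE; apply: eq_bigr => i _; rewrite mxE.
have expand i j : edge_term x i j = x i 0 ^+ 2 / w i 0 * (A i j * w j 0)
    + x j 0 ^+ 2 / w j 0 * (A i j * w i 0) - 2 * (x i 0 * A i j * x j 0).
  by rewrite /edge_term; field; rewrite !w_neq0.
have sq_sum : \sum_i x i 0 ^+ 2 = mxform 1%:M x x.
  by rewrite -sum_mul_mulmx; apply: eq_bigr => i _; rewrite mul1mx.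
have diag_row : \sum_i \sum_j x i 0 ^+ 2 / w i 0 * (A i j * w j 0) = mxform 1%:M x x.
  rewrite -sq_sum; apply: eq_bigr => i _.
  by rewrite -mulr_sumr row_sum divfK.
have diag_col : \sum_i \sum_j x j 0 ^+ 2 / w j 0 * (A i j * w i 0) = mxform 1%:M x x.
  rewrite exchange_big -sq_sum; apply: eq_bigr => j _ /=.
  by rewrite -mulr_sumr col_sum divfK.
have cross : \sum_i \sum_j 2 * (x i 0 * A i j * x j 0) = 2 * mxform A x x.
  by rewrite mxform_sum mulr_sumr; apply: eq_bigr => i _; rewrite mulr_sumr.
under eq_bigr => i _ do under eq_bigr => j _ do rewrite expand.
under eq_bigr => i _ do rewrite sumrB big_split /=.
rewrite sumrB big_split /= diag_row diag_col cross /dirichlet_energy; ring.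
Qed.

Hypothesis A_ge0 : nonneg_mx A.

Let edge_term_ge0 x i j : 0 <= edge_term x i j.
Proof.
by rewrite /edge_term mulr_ge0 ?sqr_ge0 ?mulr_ge0 ?(ltW (w_gt0 _)) ?A_ge0.
Qed.

Lemma dirichlet_energy_ge0 x : 0 <= dirichlet_energy A x.
Proof.
rewrite -(pmulr_rge0 _ (ltr0Sn _ 1)) dirichlet_energy_sum_sq.
by apply: sumr_ge0 => i _; apply: sumr_ge0 => j _.
Qed.

Lemma dirichlet_energy_eq0 x : dirichlet_energy A x = 0 ->
  forall i j, 0 < A i j -> x i 0 / w i 0 = x j 0 / w j 0.
Proof.
move=> E0 i j Aij.
have /eqP : edge_term x i j = 0.
  have sum0 : \sum_i \sum_j edge_term x i j = 0 by rewrite -dirichlet_energy_sum_sq E0 mulr0.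
  have row0 := psumr_eq0P (fun i _ => sumr_ge0 _ (fun j _ => edge_term_ge0 x i j)) sum0.
  exact: psumr_eq0P (fun j _ => edge_term_ge0 x i j) (row0 i isT) j isT.
by rewrite /edge_term !mulf_eq0 (gt_eqF Aij) !(gt_eqF (w_gt0 _)) /= orbb subr_eq0 => /eqP.
Qed.

End DirichletEnergy.

Lemma dirichlet_problem_solvable (F : fieldType) n (L : 'M[F]_n) (U : {set 'I_n}) :
  (forall x : 'cV[F]_n, (forall i, i \in U -> x i 0 = 0) ->
     (forall i, i \notin U -> (L *m x) i 0 = 0) -> x = 0) ->
  forall c : 'cV[F]_n, exists q : 'cV[F]_n,
    (forall i, i \in U -> q i 0 = c i 0) /\ (forall i, i \notin U -> (L *m q) i 0 = 0).
Proof.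
move=> L_inj c.
pose N : 'M[F]_n := \matrix_(i, j) (if i \in U then 1%:M else L) i j.
have NE x i : (N *m x) i 0 = ((if i \in U then 1%:M else L) *m x) i 0.
  by rewrite !mxE; apply: eq_bigr => j _; rewrite mxE.
have NU x i : i \in U -> (N *m x) i 0 = x i 0 by move=> iU; rewrite NE iU mul1mx.
have NL x i : i \notin U -> (N *m x) i 0 = (L *m x) i 0 by move=> iU; rewrite NE (negbTE iU).
have N_unit : N \in unitmx.
  rewrite unitmxE unitfE -det_tr; apply/negP => /det0P [v v_neq0 vN0].
  have Nv0 : N *m v^T = 0 by rewrite -[N]trmxK -trmx_mul vN0 trmx0.
  suff : v^T = 0 by move/eqP; rewrite -trmx0 (inj_eq trmx_inj) (negbTE v_neq0).
  apply: L_inj => i iU; first by rewrite -NU // Nv0 mxE.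
  by rewrite -NL // Nv0 mxE.
pose r : 'cV[F]_n := \col_i (if i \in U then c i 0 else 0).
exists (invmx N *m r).
have Nq : N *m (invmx N *m r) = r by rewrite mulmxA mulmxV // mul1mx.
split=> i iU; first by rewrite -NU // Nq mxE iU.
by rewrite -NL // Nq mxE (negbTE iU).
Qed.

Lemma mxform_lapl_mx_alpha_le (R : realFieldType) n (A : 'M[R]_n) alpha beta (q d : 'cV[R]_n) :
  beta < alpha -> alpha <= 1 / 2 -> 0 <= dirichlet_energy A d ->
  mxform (lapl (mx_alpha A alpha)) d q = 0 ->
  mxform (lapl (mx_alpha A beta)) d (q + d) = 0 ->
  mxform (lapl (mx_alpha A alpha)) q q <= mxform (lapl (mx_alpha A beta)) (q + d) (q + d).
Proof.
move=> lt_ba le_a; rewrite /dirichlet_energy !mxform_lapl_mx_alpha.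
rewrite !(mxformDl, mxformDr) (mxform1C d q) => E_ge0 orth_a orth_b.
have flux : (alpha - beta) * (mxform A q d - mxform A d q)
    = mxform 1%:M d d - mxform A d d by lra.
have flux_ge0 : 0 <= mxform A q d - mxform A d q.
  by rewrite -(@pmulr_rge0 _ (alpha - beta)) ?flux ?subr_gt0.
have : 0 <= (1 - 2 * alpha) * (mxform A q d - mxform A d q) by apply: mulr_ge0 => //; lra.
lra.
Qed.

Section CapacitySolution.
Variables (R : realFieldType) (n : nat) (A : 'M[R]_n) (w : 'cV[R]_n).
Hypotheses (A_ge0 : nonneg_mx A) (A_irr : irreducible_mx A).
Hypotheses (w_gt0 : forall i, 0 < w i 0) (Aw : A *m w = w) (ATw : A^T *m w = w).
Variables (U : {set 'I_n}) (a : R).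
Hypothesis U_neq0 : U != finset.set0.

Lemma lapl_mx_alpha_boundary_inj (x : 'cV[R]_n) :
  (forall i, i \in U -> x i 0 = 0) ->
  (forall i, i \notin U -> (lapl (mx_alpha A a) *m x) i 0 = 0) -> x = 0.
Proof.
move=> xU Lx; have [i0 i0U] := set0Pn _ U_neq0.
have E0 : dirichlet_energy A x = 0.
  by rewrite -(mxform_lapl_mx_alpha_diag _ a) (mxform_orthogonal xU Lx).
have ratio := irreducible_mx_invariant A_ge0 A_irr (dirichlet_energy_eq0 w_gt0 Aw ATw A_ge0 E0).
apply/matrixP => i j; rewrite (ord1 j) mxE.
have /eqP := ratio i i0; rewrite (xU i0) // mul0r mulf_eq0 invr_eq0 (gt_eqF (w_gt0 i)) orbF.
by move/eqP.
Qed.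

Lemma cap_sol_exists (b : 'I_n -> R) : exists q, cap_sol (mx_alpha A a) w U b q.
Proof.
have [q [qU Lq]] := dirichlet_problem_solvable lapl_mx_alpha_boundary_inj (\col_i (w i 0 * b i)).
by exists q; split=> // i iU; rewrite qU // mxE.
Qed.

End CapacitySolution.

Theorem theorem1p5 (R : realType) (n : nat) (A : 'M[R]_n) (w : 'cV[R]_n) :
  nonneg_mx A -> irreducible_mx A -> largest_eigenvalue_one A ->
  (forall i, 0 < w i 0) -> A *m w = w -> A^T *m w = w ->
  forall (U : {set 'I_n}) (b : 'I_n -> R) (alpha beta : R),
    U != finset.set0 -> U != [set: 'I_n]%SET ->
    0 <= beta -> beta <= alpha -> alpha <= 1 / 2 ->
    cap (mx_alpha A alpha) w U b <= cap (mx_alpha A beta) w U b.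
Proof.
move=> A_ge0 A_irr _ w_gt0 Aw ATw U b alpha beta U_neq0 _ _ le_ba le_a.
have [->|ne_ab] := eqVneq alpha beta; first exact: lexx.
have lt_ba : beta < alpha by rewrite lt_neqAle eq_sym ne_ab le_ba.
have sol c := xgetPex 0 (cap_sol_exists A_ge0 A_irr w_gt0 Aw ATw c U_neq0 b).
rewrite /cap /= !sum_mul_mulmx.
move: (sol alpha) (sol beta).
set q1 := xget 0 _; set q2 := xget 0 _ => -[q1U L1q1] [q2U L2q2].
have dU i : i \in U -> (q2 - q1) i 0 = 0 by move=> iU; rewrite !mxE q1U // q2U // subrr.
have := mxform_lapl_mx_alpha_le lt_ba le_a (dirichlet_energy_ge0 w_gt0 Aw ATw A_ge0 (q2 - q1))
  (mxform_orthogonal dU L1q1).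
by rewrite [q1 + _]addrC subrK; apply; apply: mxform_orthogonal dU L2q2.
Qed.
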